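(* Let $f:[0,\infty)\rightarrow[0,\infty)$ be a continuous function which is $3$-convex, nondecreasing and concave. Then for every $\alpha\in(0,1]$ the function $f^{\alpha}$ (i.e. $x\mapsto f(x)^{\alpha}$) is also continuous, $3$-convex, nondecreasing and concave on $[0,\infty)$.
   Context: A function $f$ defined on an interval $I$ is called $3$-convex if for all $x_0<x_1<x_2<x_3$ in $I$ the third-order divided difference $[x_0,x_1,x_2,x_3;f]=\sum_{j=0}^{3}\frac{f(x_j)}{\prod_{k\neq j}(x_j-x_k)}$ is nonnegative. *)

From HB Require Import structures.
From mathcomp Require Import all_boot all_order all_algebra.
From mathcomp Require Import all_classical all_reals all_analysis.
Set Implicit Arguments. Unset Strict Implicit. Unset Printing Implicit Defensive.
Import Order.TTheory GRing.Theory Num.Theory.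
Import numFieldNormedType.Exports.
Local Open Scope classical_set_scope.
Local Open Scope ring_scope.

Definition divdiff3 {R : realType} (f : R -> R) (x0 x1 x2 x3 : R) : R :=
  f x0 / ((x0 - x1) * (x0 - x2) * (x0 - x3))
+ f x1 / ((x1 - x0) * (x1 - x2) * (x1 - x3))
+ f x2 / ((x2 - x0) * (x2 - x1) * (x2 - x3))
+ f x3 / ((x3 - x0) * (x3 - x1) * (x3 - x2)).

Definition three_convex_nonneg {R : realType} (f : R -> R) : Prop :=
  forall x0 x1 x2 x3 : R, 0 <= x0 -> x0 < x1 -> x1 < x2 -> x2 < x3 ->
    0 <= divdiff3 f x0 x1 x2 x3.

Definition nondecreasing_nonneg {R : realType} (f : R -> R) : Prop :=
  forall x y : R, 0 <= x -> x <= y -> f x <= f y.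

Definition concave_nonneg {R : realType} (f : R -> R) : Prop :=
  forall x y t : R, 0 <= x -> 0 <= y -> 0 <= t -> t <= 1 ->
    t * f x + (1 - t) * f y <= f (t * x + (1 - t) * y).

Definition continuous_nonneg {R : realType} (f : R -> R) : Prop :=
  {within `[0, +oo[, continuous f}.

From HB Require Import structures.
From mathcomp Require Import all_boot all_order all_algebra.
From mathcomp Require Import all_classical all_reals all_analysis.
From mathcomp Require Import ring lra.
Set Implicit Arguments. Unset Strict Implicit. Unset Printing Implicit Defensive.
Import Order.TTheory GRing.Theory Num.Theory.
Import numFieldNormedType.Exports.
Local Open Scope classical_set_scope.
Local Open Scope ring_scope.

(* Write g = phi \o f with phi y = y `^ alpha.  The power function phi is
   itself continuous, nondecreasing, concave and 3-convex on [0, +oo): its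
   derivative alpha y `^ (alpha - 1) is nonincreasing and convex, and Rolle's
   theorem applied to the cubic interpolation error gives
   [a, b, c, d; phi] = [x1, x2, x3; phi'] / 3 for some a < x1 < x2 < x3 < d.
   Each of the four properties then passes from phi and f to phi \o f.  For
   3-convexity this is the chain rule for divided differences (fi = f xi)
     [x0, x1, x2, x3; phi \o f] = [f0, f3; phi] [x0, x1, x2, x3; f]
       + [f0, f1, f3; phi] [x0, x1; f] [x1, x2, x3; f]
       + [f0, f2, f3; phi] [x0, x1, x2; f] [x2, x3; f]
       + [f0, f1, f2, f3; phi] [x0, x1; f] [x1, x2; f] [x2, x3; f],
   in which every term is a product of divided differences of known signs.
   The identity needs distinct values fi, but a concave nondecreasing f that
   takes a value twice is constant from then on, so the only other cases are
   f0 = f1 = f2 = f3, f1 = f2 = f3 and f2 = f3, where shorter identities hold. *)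

Section DividedDifferences.
Context {R : realType}.
Implicit Types (h phi : R -> R) (a b c d : R).

Definition divdiff1 h a b := (h b - h a) / (b - a).
Definition divdiff2 h a b c := (divdiff1 h b c - divdiff1 h a b) / (c - a).

Lemma divdiff3E h a b c d : a < b -> b < c -> c < d ->
  divdiff3 h a b c d = (divdiff2 h b c d - divdiff2 h a b c) / (d - a).
Proof. by move=> *; rewrite /divdiff3 /divdiff2 /divdiff1; field; lra. Qed.

Lemma divdiff2N h a b c :
  divdiff2 (fun x => - h x) a b c = - divdiff2 h a b c.
Proof. by rewrite /divdiff2 /divdiff1; ring. Qed.

Lemma divdiff3_const h (x0 x1 x2 x3 : R) : x0 < x1 -> x1 < x2 -> x2 < x3 ->
  h x1 = h x0 -> h x2 = h x0 -> h x3 = h x0 -> divdiff3 h x0 x1 x2 x3 = 0.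
Proof. by move=> ? ? ? h10 h20 h30; rewrite /divdiff3 h10 h20 h30; field; lra. Qed.

Lemma divdiff3_comp phi h (x0 x1 x2 x3 : R) :
  x0 < x1 -> x1 < x2 -> x2 < x3 -> h x0 < h x1 -> h x1 < h x2 -> h x2 < h x3 ->
  divdiff3 (phi \o h) x0 x1 x2 x3 =
    divdiff1 phi (h x0) (h x3) * divdiff3 h x0 x1 x2 x3
  + divdiff2 phi (h x0) (h x1) (h x3) * divdiff1 h x0 x1 * divdiff2 h x1 x2 x3
  + divdiff2 phi (h x0) (h x2) (h x3) * divdiff2 h x0 x1 x2 * divdiff1 h x2 x3
  + divdiff3 phi (h x0) (h x1) (h x2) (h x3)
      * divdiff1 h x0 x1 * divdiff1 h x1 x2 * divdiff1 h x2 x3.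
Proof. by move=> *; rewrite !divdiff3E // /divdiff2 /divdiff1 /=; field; lra. Qed.

Lemma divdiff3_comp_eq23 phi h (x0 x1 x2 x3 : R) :
  x0 < x1 -> x1 < x2 -> x2 < x3 -> h x0 < h x1 -> h x1 < h x2 -> h x3 = h x2 ->
  divdiff3 (phi \o h) x0 x1 x2 x3 =
    divdiff1 phi (h x0) (h x2) * divdiff3 h x0 x1 x2 x3
  + divdiff2 phi (h x0) (h x1) (h x2) * divdiff1 h x0 x1 * divdiff2 h x1 x2 x3.
Proof.
move=> ? ? ? ? ? h32; rewrite !divdiff3E // /divdiff2 /divdiff1 /= h32.
by field; lra.
Qed.

Lemma divdiff3_comp_eq123 phi h (x0 x1 x2 x3 : R) :
  x0 < x1 -> x1 < x2 -> x2 < x3 -> h x0 < h x1 -> h x2 = h x1 -> h x3 = h x1 ->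
  divdiff3 (phi \o h) x0 x1 x2 x3 =
    divdiff1 phi (h x0) (h x1) * divdiff3 h x0 x1 x2 x3.
Proof.
move=> ? ? ? ? h21 h31; rewrite !divdiff3E // /divdiff2 /divdiff1 /= h21 h31.
by field; lra.
Qed.

End DividedDifferences.

Section ConcaveNonneg.
Context {R : realType}.
Implicit Types (h : R -> R) (a b c : R).

Lemma nondecreasing_divdiff1_ge0 h a b : nondecreasing_nonneg h ->
  0 <= a -> a <= b -> 0 <= divdiff1 h a b.
Proof. by move=> h_nd a0 ab; rewrite divr_ge0 ?subr_ge0 ?h_nd. Qed.

Lemma divdiff2_le0E h a b c : a < b -> b < c ->
  (divdiff2 h a b c <= 0) = ((c - b) * h a + (b - a) * h c <= (c - a) * h b).
Proof.
move=> ab bc; rewrite /divdiff2 /divdiff1.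
rewrite pmulr_lle0 ?invr_gt0 ?subr_gt0 ?(lt_trans ab) // subr_le0.
rewrite ler_pdivrMr ?subr_gt0 // mulrAC ler_pdivlMr ?subr_gt0 //.
by rewrite -[LHS]subr_ge0 -[RHS]subr_ge0; congr (0 <= _); ring.
Qed.

Lemma concave_divdiff2_le0 h a b c : concave_nonneg h ->
  0 <= a -> a < b -> b < c -> divdiff2 h a b c <= 0.
Proof.
move=> h_ccv a0 ab bc; have ca : 0 < c - a by lra.
set t := (c - b) / (c - a).
have t0 : 0 <= t by rewrite divr_ge0; lra.
have t1 : t <= 1 by rewrite ler_pdivrMr; lra.
have := h_ccv a c t a0 (ltW (le_lt_trans a0 (lt_trans ab bc))) t0 t1.
have -> : t * a + (1 - t) * c = b by rewrite /t; field; lra.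
rewrite -(ler_pM2l ca) divdiff2_le0E //; congr (_ <= _); rewrite /t; field; lra.
Qed.

Lemma divdiff2_le0_concave h :
  (forall a b c, 0 <= a -> a < b -> b < c -> divdiff2 h a b c <= 0) ->
  concave_nonneg h.
Proof.
move=> h_dd2.
suff jensen x y t : 0 <= x -> x < y -> 0 < t -> t < 1 ->
    t * h x + (1 - t) * h y <= h (t * x + (1 - t) * y).
  move=> x y t x0 y0; rewrite le_eqVlt => /predU1P[<- _|t0].
    by rewrite !mul0r !add0r subr0 !mul1r.
  rewrite le_eqVlt => /predU1P[-> |t1]; first by rewrite subrr !mul0r !addr0 !mul1r.
  have [xy|yx|<-] := ltgtP x y; first exact: jensen.
    have := jensen y x (1 - t) y0 yx.
    by rewrite opprB subrKC (addrC (_ * h y)) (addrC (_ * y)); apply; lra.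
  by rewrite -!mulrDl subrKC !mul1r.
move=> x0 xy t0 t1; set w := t * x + (1 - t) * y.
have xw : x < w by rewrite /w; nra.
have wy : w < y by rewrite /w; nra.
have := h_dd2 x w y x0 xw wy; rewrite divdiff2_le0E // => three_point.
rewrite -(@ler_pM2l _ (y - x)) ?subr_gt0 //.
by move: three_point; congr (_ <= _); rewrite /w; ring.
Qed.

Lemma concave_nondecreasing_flat h a b c :
  nondecreasing_nonneg h -> concave_nonneg h ->
  0 <= a -> a < b -> b < c -> h a = h b -> h b = h c.
Proof.
move=> h_nd h_ccv a0 ab bc hab.
have := concave_divdiff2_le0 h_ccv a0 ab bc; rewrite divdiff2_le0E // hab.
have := h_nd b c (le_trans a0 (ltW ab)) (ltW bc).
nra.
Qed.

End ConcaveNonneg.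

Section MeanValue.
Context {R : realType}.
Implicit Types (h : R -> R) (a b c d : R).

Lemma divdiff1_MVT h (dh : R -> R) a b c d : a <= b -> b < c -> c <= d ->
  {within `[a, d], continuous h} ->
  (forall x, x \in `]a, d[ -> is_derive x 1 h (dh x)) ->
  exists2 x, b < x < c & divdiff1 h b c = dh x.
Proof.
move=> ab bc cd h_cont h_der.
have h_der_bc x : x \in `]b, c[ -> is_derive x 1 h (dh x).
  rewrite in_itv /= => /andP[bx xc]; apply: h_der.
  by rewrite in_itv /= (le_lt_trans ab bx) (lt_le_trans xc cd).
have : `[b, c] `<=` `[a, d].
  move=> x /=; rewrite !in_itv /= => /andP[bx xc].
  by rewrite (le_trans ab bx) (le_trans xc cd).
move=> /continuous_subspaceW /(_ h_cont) h_cont_bc.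
have [x] := MVT bc h_der_bc h_cont_bc; rewrite in_itv /= => x_bc E.
by exists x => //; rewrite /divdiff1 E mulfK // subr_eq0 gt_eqF.
Qed.

Lemma divdiff2_le0_derive h (dh : R -> R) a b c : a < b -> b < c ->
  {within `[a, c], continuous h} ->
  (forall x, x \in `]a, c[ -> is_derive x 1 h (dh x)) ->
  {in `]a, c[ &, {homo dh : x y /~ x <= y}} ->
  divdiff2 h a b c <= 0.
Proof.
move=> ab bc h_cont h_der dh_ni; rewrite /divdiff2.
have [x1 /andP[ax1 x1b] ->] := divdiff1_MVT (lexx a) ab (ltW bc) h_cont h_der.
have [x2 /andP[bx2 x2c] ->] := divdiff1_MVT (ltW ab) bc (lexx c) h_cont h_der.
have : dh x2 <= dh x1 by apply: dh_ni; rewrite ?in_itv /=; lra.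
by move=> dh12; rewrite pmulr_lle0 ?invr_gt0 ?subr_gt0 ?subr_le0 //; lra.
Qed.

Lemma divdiff3_mean_divdiff2 (h dh : R -> R) (a b c d : R) :
  a < b -> b < c -> c < d ->
  {within `[a, d], continuous h} ->
  (forall x, x \in `]a, d[ -> is_derive x 1 h (dh x)) ->
  exists x1 x2 x3, [/\ a < x1, x1 < x2, x2 < x3, x3 < d &
    divdiff2 dh x1 x2 x3 = 3 * divdiff3 h a b c d].
Proof.
move=> ab bc cd h_cont h_der.
set B := divdiff1 h a b; set C := divdiff2 h a b c; set D := divdiff3 h a b c d.
(* The Newton form of the cubic interpolating h at a, b, c, d; the quadratic
   dN = N' has second divided difference 3 * D. *)
pose N : R -> R := cst (h a) + cst B * (id - cst a)
  + cst C * ((id - cst a) * (id - cst b))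
  + cst D * ((id - cst a) * (id - cst b) * (id - cst c)).
pose dN (x : R) := B + C * ((x - a) + (x - b))
  + D * ((x - b) * (x - c) + (x - a) * (x - c) + (x - a) * (x - b)).
have N_der (x : R) : is_derive x 1 N (dN x).
  by apply: is_derive_eq; rewrite /= !fctE -![_ *: _]/(_ * _) /dN; ring.
have N_interp : [/\ N a = h a, N b = h b, N c = h c & N d = h d].
  rewrite /N !fctE /B /C /D divdiff3E // /divdiff2 /divdiff1.
  by split; field; lra.
have rolle u v : a <= u -> u < v -> v <= d -> N u = h u -> N v = h v ->
    exists2 x, u < x < v & dh x = dN x.
  move=> au uv vd Nu Nv.
  have p_der x : x \in `]u, v[ -> is_derive x 1 (h - N) (dh x - dN x).
    rewrite in_itv /= => /andP[ux xv]; apply: is_deriveB; apply: h_der.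
    by rewrite in_itv /= (le_lt_trans au ux) (lt_le_trans xv vd).
  have p_cont : {within `[u, v], continuous (h - N)}.
    have h_cont_uv : {within `[u, v], continuous h}.
      apply: continuous_subspaceW h_cont => x /=; rewrite !in_itv /=.
      by move=> /andP[ux xv]; rewrite (le_trans au ux) (le_trans xv vd).
    have N_cont_uv : {within `[u, v], continuous N}.
      apply: continuous_subspaceT => x; apply: differentiable_continuous.
      by apply/derivable1_diffP; case: (N_der x).
    apply/subspace_continuousP => x x_uv.
    move/subspace_continuousP : h_cont_uv => /(_ x x_uv) h_cvg.
    move/subspace_continuousP : N_cont_uv => /(_ x x_uv) N_cvg.
    exact: cvgB h_cvg N_cvg.
  have p_derivable x : x \in `]u, v[ -> derivable (h - N) x 1 by move=> /p_der [].
  have [|x ux [_ p'0]] := Rolle uv p_derivable p_cont.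
    by rewrite !fctE Nu Nv !subrr.
  have [_ p'x] := p_der x ux.
  exists x; first by rewrite in_itv in ux.
  by apply/eqP; rewrite -subr_eq0 -p'x p'0.
have [Na Nb Nc Nd] := N_interp.
have [x1 /andP[ax1 x1b] E1] := rolle a b (lexx a) ab (ltW (lt_trans bc cd)) Na Nb.
have [x2 /andP[bx2 x2c] E2] := rolle b c (ltW ab) bc (ltW cd) Nb Nc.
have [x3 /andP[cx3 x3d] E3] := rolle c d (ltW (lt_trans ab bc)) cd (lexx d) Nc Nd.
exists x1, x2, x3; split; try lra.
by rewrite /divdiff2 /divdiff1 E1 E2 E3 /dN; field; lra.
Qed.

End MeanValue.

Section PowerFunction.
Context {R : realType}.

Lemma le0_ger_powR (r : R) : r <= 0 ->
  {in Num.pos &, {homo @powR R ^~ r : x y /~ x <= y}}.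
Proof.
move=> r_le0 x y; rewrite !posrE => x0 y0 xy.
rewrite -(opprK r) !(powRN _ (- r)) lef_pV2 ?posrE ?powR_gt0 //.
by apply: (@ge0_ler_powR R (- r)); rewrite ?oppr_ge0 ?nnegrE ?(ltW x0) ?(ltW y0).
Qed.

Variable alpha : R.
Hypothesis alpha_gt0 : 0 < alpha.

(* [powR] is 1 on the negative reals, so [powR ^~ alpha] is not continuous at
   0; its even extension is. *)
Lemma continuous_normr_powR : continuous (fun y : R => `|y| `^ alpha).
Proof.
move=> y; have [->|y0] := eqVneq y 0.
  apply/cvgrPdist_lt => e e0; apply/nbhs_normP.
  exists (e `^ alpha^-1); first by rewrite /= powR_gt0.
  move=> t /=; rewrite normr0 powR0 ?gt_eqF // !sub0r !normrN => te.
  rewrite ger0_norm ?powR_ge0 //.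
  have -> : e = (e `^ alpha^-1) `^ alpha.
    by rewrite -powRrM mulVf ?gt_eqF ?powRr1 ?ltW.
  by apply: gt0_ltr_powR; rewrite ?nnegrE ?powR_ge0.
have -> : (fun y : R => `|y| `^ alpha) = (@powR R ^~ alpha) \o (@Num.norm _ R) by [].
apply: continuous_comp; first exact: norm_continuous.
apply: differentiable_continuous; apply/derivable1_diffP.
by apply: derivable_powR; rewrite in_itv /= andbT normr_gt0.
Qed.

Lemma powR_continuous_nonneg : continuous_nonneg (@powR R ^~ alpha).
Proof.
apply: (@subspace_eq_continuous _ _ _ (fun y : R => `|y| `^ alpha)).
  by move=> x; rewrite inE /= in_itv /= andbT => x0; rewrite ger0_norm.
exact: continuous_subspaceT continuous_normr_powR.
Qed.

Lemma powR_nondecreasing_nonneg : nondecreasing_nonneg (@powR R ^~ alpha).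
Proof.
move=> x y x0 xy; apply: ge0_ler_powR; rewrite ?nnegrE ?(ltW alpha_gt0) //.
exact: le_trans xy.
Qed.

Hypothesis alpha_le1 : alpha <= 1.

Lemma powR_divdiff2_le0 (a b c : R) : 0 <= a -> a < b -> b < c ->
  divdiff2 (@powR R ^~ alpha) a b c <= 0.
Proof.
move=> a0 ab bc.
apply: (@divdiff2_le0_derive _ _ (fun x => alpha * x `^ (alpha - 1))) => //.
- apply: continuous_subspaceW powR_continuous_nonneg => x /=.
  by rewrite !in_itv /= andbT => /andP[ax _]; exact: le_trans ax.
- move=> x; rewrite in_itv /= => /andP[ax _]; apply: is_derive1_powR.
  exact: le_lt_trans ax.
- move=> x y; rewrite !in_itv /= => /andP[ax _] /andP[ay _] xy.
  rewrite ler_pM2l // le0_ger_powR ?subr_le0 // posrE; lra.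
Qed.

Lemma powR_concave_nonneg : concave_nonneg (@powR R ^~ alpha).
Proof. exact: divdiff2_le0_concave powR_divdiff2_le0. Qed.

Lemma powR_three_convex_nonneg : three_convex_nonneg (@powR R ^~ alpha).
Proof.
move=> a b c d a0 ab bc cd.
pose dphi (x : R) := alpha * x `^ (alpha - 1).
have dphi_der (x : R) : 0 < x ->
    is_derive x 1 (fun y => - dphi y) (alpha * (1 - alpha) * x `^ (alpha - 1 - 1)).
  move=> x0; have := is_derive1_powR (alpha - 1) x0.
  move=> /(is_deriveZ alpha)/is_deriveN/is_derive_eq; apply.
  by rewrite -[_ *: _]/(_ * _); ring.
have [||x1 [x2 [x3 [ax1 x12 x23 x3d dd2E]]]] :=
  @divdiff3_mean_divdiff2 _ (@powR R ^~ alpha) dphi a b c d ab bc cd.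
- apply: continuous_subspaceW powR_continuous_nonneg => x /=.
  by rewrite !in_itv /= andbT => /andP[ax _]; exact: le_trans ax.
- move=> x; rewrite in_itv /= => /andP[ax _]; apply: is_derive1_powR; lra.
rewrite -(pmulr_rge0 _ (ltr0n _ 3)) -dd2E -oppr_le0 -divdiff2N.
apply: (divdiff2_le0_derive x12 x23
  (dh := fun x => alpha * (1 - alpha) * x `^ (alpha - 1 - 1))).
- apply: continuous_in_subspaceT => x; rewrite inE /= in_itv /= => /andP[x1x _].
  have /dphi_der [dphi_derivable _] : 0 < x by lra.
  exact/differentiable_continuous/derivable1_diffP.
- by move=> x; rewrite in_itv /= => /andP[x1x _]; apply: dphi_der; lra.
- move=> x y; rewrite !in_itv /= => /andP[x1x _] /andP[x1y _] yx.
  apply: ler_wpM2l; first by rewrite mulr_ge0 ?subr_ge0 // ltW.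
  apply: (le0_ger_powR (r := alpha - 1 - 1)); rewrite ?posrE; try lra.
  by rewrite subr_le0 lerBlDr (le_trans alpha_le1) // lerDl.
Qed.

End PowerFunction.

Section Composition.
Context {R : realType}.
Variables phi f : R -> R.
Hypothesis f_ge0 : forall x, 0 <= x -> 0 <= f x.

Lemma continuous_nonneg_comp :
  continuous_nonneg phi -> continuous_nonneg f -> continuous_nonneg (phi \o f).
Proof.
move=> /subspace_continuousP phi_cont /subspace_continuousP f_cont.
have f_itv x : `[0, +oo[%classic x -> `[0, +oo[%classic (f x).
  by rewrite /= !in_itv /= !andbT; exact: f_ge0.
apply/subspace_continuousP => x x0; apply: cvg_comp (phi_cont _ (f_itv _ x0)).
have f_within : (f @ within `[0, +oo[ (nbhs x)) `[0, +oo[%classic.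
  by apply: (within_nbhsW x0) => z /f_itv.
by move=> P /(f_cont x x0); apply: filterS2 f_within => z /[swap]; apply.
Qed.

Lemma nondecreasing_nonneg_comp : nondecreasing_nonneg phi ->
  nondecreasing_nonneg f -> nondecreasing_nonneg (phi \o f).
Proof.
by move=> phi_nd f_nd x y x0 xy; apply: phi_nd; [exact: f_ge0 | exact: f_nd].
Qed.

Lemma concave_nonneg_comp : nondecreasing_nonneg phi -> concave_nonneg phi ->
  concave_nonneg f -> concave_nonneg (phi \o f).
Proof.
move=> phi_nd phi_ccv f_ccv x y t x0 y0 t0 t1 /=.
apply: le_trans (phi_ccv _ _ _ (f_ge0 x0) (f_ge0 y0) t0 t1) _.
apply: phi_nd (f_ccv _ _ _ x0 y0 t0 t1).
by rewrite addr_ge0 // mulr_ge0 ?subr_ge0 ?f_ge0.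
Qed.

End Composition.

Section ThreeConvexComposition.
Context {R : realType}.
Variables phi f : R -> R.
Hypotheses (phi_nd : nondecreasing_nonneg phi) (phi_ccv : concave_nonneg phi)
  (phi_3cvx : three_convex_nonneg phi).
Hypotheses (f_ge0 : forall x, 0 <= x -> 0 <= f x) (f_nd : nondecreasing_nonneg f)
  (f_ccv : concave_nonneg f) (f_3cvx : three_convex_nonneg f).

Section FourPoints.
Variables x0 x1 x2 x3 : R.
Hypotheses (x0_ge0 : 0 <= x0) (x01 : x0 < x1) (x12 : x1 < x2) (x23 : x2 < x3).

Let x1_ge0 : 0 <= x1. Proof. exact: le_trans x0_ge0 (ltW x01). Qed.
Let x2_ge0 : 0 <= x2. Proof. exact: le_trans x1_ge0 (ltW x12). Qed.
Let fx0_ge0 : 0 <= f x0. Proof. exact: f_ge0. Qed.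

Let f_slope01 : 0 <= divdiff1 f x0 x1.
Proof. exact: nondecreasing_divdiff1_ge0 (ltW x01). Qed.
Let f_slope12 : 0 <= divdiff1 f x1 x2.
Proof. exact: nondecreasing_divdiff1_ge0 (ltW x12). Qed.
Let f_slope23 : 0 <= divdiff1 f x2 x3.
Proof. exact: nondecreasing_divdiff1_ge0 (ltW x23). Qed.
Let f_dd2_012 : divdiff2 f x0 x1 x2 <= 0.
Proof. exact: concave_divdiff2_le0. Qed.
Let f_dd2_123 : divdiff2 f x1 x2 x3 <= 0.
Proof. exact: concave_divdiff2_le0. Qed.
Let f_dd3 : 0 <= divdiff3 f x0 x1 x2 x3.
Proof. exact: f_3cvx. Qed.

Lemma divdiff3_comp_ge0_eq01 : f x0 = f x1 -> 0 <= divdiff3 (phi \o f) x0 x1 x2 x3.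
Proof.
move=> f01; have f12 := concave_nondecreasing_flat f_nd f_ccv x0_ge0 x01 x12 f01.
have f23 := concave_nondecreasing_flat f_nd f_ccv x1_ge0 x12 x23 f12.
by rewrite (divdiff3_const (h := phi \o f)) //= -?f23 -?f12 -?f01.
Qed.

Lemma divdiff3_comp_ge0_eq12 : f x0 < f x1 -> f x1 = f x2 ->
  0 <= divdiff3 (phi \o f) x0 x1 x2 x3.
Proof.
move=> f01 f12; have f23 := concave_nondecreasing_flat f_nd f_ccv x1_ge0 x12 x23 f12.
rewrite divdiff3_comp_eq123 -?f23 // mulr_ge0 //.
exact: nondecreasing_divdiff1_ge0 (ltW f01).
Qed.

Lemma divdiff3_comp_ge0_eq23 : f x0 < f x1 -> f x1 < f x2 -> f x2 = f x3 ->
  0 <= divdiff3 (phi \o f) x0 x1 x2 x3.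
Proof.
move=> f01 f12 f23; rewrite divdiff3_comp_eq23 // addr_ge0 //.
  by rewrite mulr_ge0 // nondecreasing_divdiff1_ge0 // ltW // (lt_trans f01).
by rewrite mulr_le0 // mulr_le0_ge0 // concave_divdiff2_le0.
Qed.

Lemma divdiff3_comp_ge0_lt : f x0 < f x1 -> f x1 < f x2 -> f x2 < f x3 ->
  0 <= divdiff3 (phi \o f) x0 x1 x2 x3.
Proof.
move=> f01 f12 f23; have f02 := lt_trans f01 f12; have f13 := lt_trans f12 f23.
rewrite divdiff3_comp // !addr_ge0 //.
- by rewrite mulr_ge0 // nondecreasing_divdiff1_ge0 // ltW // (lt_trans f02).
- by rewrite mulr_le0 // mulr_le0_ge0 // concave_divdiff2_le0.
- by rewrite mulr_ge0 // mulr_le0 // concave_divdiff2_le0.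
- by do 3 (apply: mulr_ge0 => //); apply: phi_3cvx.
Qed.

End FourPoints.

Lemma three_convex_nonneg_comp : three_convex_nonneg (phi \o f).
Proof.
move=> x0 x1 x2 x3 x0_ge0 x01 x12 x23.
have x1_ge0 := le_trans x0_ge0 (ltW x01); have x2_ge0 := le_trans x1_ge0 (ltW x12).
have := f_nd x0_ge0 (ltW x01); rewrite le_eqVlt => /predU1P[f01|f01].
  exact: divdiff3_comp_ge0_eq01.
have := f_nd x1_ge0 (ltW x12); rewrite le_eqVlt => /predU1P[f12|f12].
  exact: divdiff3_comp_ge0_eq12.
have := f_nd x2_ge0 (ltW x23); rewrite le_eqVlt => /predU1P[f23|f23].
  exact: divdiff3_comp_ge0_eq23.
exact: divdiff3_comp_ge0_lt.
Qed.

End ThreeConvexComposition.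

Theorem corollary1 (R : realType) (f : R -> R)
  (f_ge0 : forall x : R, 0 <= x -> 0 <= f x)
  (f_cont : continuous_nonneg f)
  (f_3cvx : three_convex_nonneg f)
  (f_nd : nondecreasing_nonneg f)
  (f_ccv : concave_nonneg f)
  (alpha : R) (alpha_gt0 : 0 < alpha) (alpha_le1 : alpha <= 1) :
  let g := fun x : R => f x `^ alpha in
  continuous_nonneg g /\ three_convex_nonneg g /\
  nondecreasing_nonneg g /\ concave_nonneg g.
Proof.
have pow_cont := powR_continuous_nonneg alpha_gt0.
have pow_nd := powR_nondecreasing_nonneg alpha_gt0.
have pow_ccv := powR_concave_nonneg alpha_gt0 alpha_le1.
have pow_3cvx := powR_three_convex_nonneg alpha_gt0 alpha_le1.
split; [|split; [|split]].
- exact: continuous_nonneg_comp f_ge0 pow_cont f_cont.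
- exact: three_convex_nonneg_comp pow_nd pow_ccv pow_3cvx f_ge0 f_nd f_ccv f_3cvx.
- exact: nondecreasing_nonneg_comp f_ge0 pow_nd f_nd.
- exact: concave_nonneg_comp f_ge0 pow_nd pow_ccv f_ccv.
Qed.
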